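(* Let $P$ be a finite poset with $n$ elements and $k\ge 0$. Then there is a bijection between $\mathrm{Lin}^{+k}(P)$ and the set of triples $(T,\bar t,\bar p)$ where $T\in\mathrm{Lin}(P)$, $\bar t=(t_1,\dots,t_k)$ is a sequence of integers with $0<t_1\le\cdots\le t_k\le n$, and $\bar p=(p_1,\dots,p_k)\in P^k$ with $p_i$ a maximal element of $T^{-1}(\{1,\dots,t_i\})$ for every $i$.
   Context: $\mathrm{Lin}(P)$ is the set of linear extensions of $P$: bijections $T:P\to[n]$ with $T(p)<T(q)$ whenever $p<q$. $\mathrm{Lin}^{+k}(P)$ is the set of set-valued linear extensions with values in $[n+k]$: maps $S$ from $P$ to subsets of $[n+k]$ such that each $S(p)$ is nonempty, the sets $S(p)$ are pairwise disjoint with union $[n+k]$, and $\max S(p)<\min S(q)$ whenever $p<q$. *)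

From HB Require Import structures.
From mathcomp Require Import all_boot all_order.
Set Implicit Arguments. Unset Strict Implicit. Unset Printing Implicit Defensive.
Import Order.TTheory.
Local Open Scope order_scope.

(* Conventions: [m] = {1,...,m} is modelled by 'I_m = {0,...,m-1}
   (value v in 'I_m stands for v+1 in [m]). *)

Section Defs.
Context {d : Order.disp_t} (P : finPOrderType d).

Definition is_lin (T : {ffun P -> 'I_#|P|}) : Prop :=
  bijective T /\ (forall p q : P, p < q -> (T p < T q)%N).

Definition Lin := {T : {ffun P -> 'I_#|P|} | is_lin T}.

(* Lin^{+k}(P): S : P -> subsets of [n+k], nonempty, pairwise disjoint,
   covering [n+k], with max S(p) < min S(q) whenever p < q. *)
Definition is_setlin (k : nat) (S : {ffun P -> {set 'I_(#|P| + k)}}) : Prop :=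
  [/\ forall p, S p != set0,
      forall p q, p != q -> [disjoint S p & S q],
      \bigcup_(p : P) S p = setT
    & forall p q : P, p < q ->
        forall a b, a \in S p -> b \in S q -> (a < b)%N ].

Definition SetLin (k : nat) := {S : {ffun P -> {set 'I_(#|P| + k)}} | is_setlin S}.

Definition is_maximal_in (A : {set P}) (p : P) : Prop :=
  p \in A /\ (forall q, q \in A -> ~ (p < q)).

(* T^{-1}({1,...,t}) in the 0-based encoding: values 0..t-1 *)
Definition lin_preimage (T : {ffun P -> 'I_#|P|}) (t : nat) : {set P} :=
  [set x | (T x < t)%N].

Definition is_triple (k : nat)
    (x : Lin * ({ffun 'I_k -> nat} * {ffun 'I_k -> P})) : Prop :=
  let T := proj1_sig x.1 in let t := x.2.1 in let pp := x.2.2 in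
  [/\ forall i : 'I_k, (0 < t i)%N,
      forall i j : 'I_k, (i <= j)%N -> (t i <= t j)%N,
      forall i : 'I_k, (t i <= #|P|)%N
    & forall i : 'I_k, is_maximal_in (lin_preimage T (t i)) (pp i)].

Definition Triples (k : nat) :=
  {x : Lin * ({ffun 'I_k -> nat} * {ffun 'I_k -> P}) | is_triple x}.

End Defs.

(* The triple (T, t, p) is encoded by the set-valued extension whose block at q
   consists of the position of q in T, shifted by the number of thresholds t_i <= T q,
   together with the extra positions t_i + i of the indices i with p_i = q.
   Conversely, the minima of the blocks of a set-valued extension S occupy n
   positions whose order gives T; listing the k remaining positions increasingly as
   a_1 < ... < a_k, t_i is the number of minima below a_i and p_i is the owner of a_i.
   Maximality of p_i in T^-1 {1, ..., t_i} is exactly what puts a_i after min S(p_i)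
   and before min S(q) for every q > p_i, so that blocks are ordered as P demands. *)

From HB Require Import structures.
From mathcomp Require Import all_boot all_order zify.
From Stdlib Require Import ProofIrrelevance IndefiniteDescription.
Set Implicit Arguments. Unset Strict Implicit. Unset Printing Implicit Defensive.
Import Order.TTheory.

Lemma card_ltn_ord N m : m <= N -> #|[set j : 'I_N | j < m]| = m.
Proof.
move=> le_mN; have -> : [set j : 'I_N | j < m] = widen_ord le_mN @: [set: 'I_m].
  apply/setP => j; rewrite inE; apply/idP/imsetP => [lt_jm|[i _ ->]].
    by exists (Ordinal lt_jm) => //; apply: val_inj.
  by rewrite /= ltn_ord.
rewrite card_imset ?cardsT ?card_ord // => i j /(congr1 val) eq_ij.
exact: val_inj.
Qed.

Lemma card_ltn_bij (A : finType) n (T : A -> 'I_n) (p : A) :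
  bijective T -> #|[set q | T q < T p]| = T p.
Proof.
move=> bijT; rewrite -(card_imset _ (bij_inj bijT)).
rewrite -[RHS](card_ltn_ord (ltnW (ltn_ord (T p)))).
apply: eq_card => j; rewrite inE; apply/imsetP/idP => [[q]|lt_jT].
  by rewrite inE => lt_qp ->.
by case: bijT => T' TK T'K; exists (T' j); rewrite ?inE T'K.
Qed.

Section IncreasingEnumeration.
Variables (k N : nat).

Lemma incr_enum (E : {set 'I_N}) : #|E| = k ->
  exists v : 'I_k -> 'I_N, {mono v : i j / i < j} /\ v @: setT = E.
Proof.
move=> cardE; pose v i := Order.enum_val (A := E) (cast_ord (esym cardE) i).
exists v; split=> [i j|].
  have := leW_mono (Order.le_enum_val (@le_total _ 'I_N) (A := E)).
  by move=> /(_ (cast_ord (esym cardE) i) (cast_ord (esym cardE) j)).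
apply/setP => a; apply/imsetP/idP => [[i _ ->]|aE]; first exact: Order.enum_valP.
exists (cast_ord cardE (Order.enum_rank_in aE a)) => //.
by rewrite /v cast_ordK Order.enum_rankK_in.
Qed.

Variables (v : 'I_k -> 'I_N) (v_mono : {mono v : i j / i < j}).

Lemma incr_inj : injective v.
Proof.
move=> i j eq_v; case: (ltngtP i j) => [lt_ij|lt_ji|/val_inj //].
  by have := lt_ij; rewrite -v_mono eq_v ltnn.
by have := lt_ji; rewrite -v_mono eq_v ltnn.
Qed.

Lemma card_incr_ltn i : #|[set j | v j < v i]| = i.
Proof.
rewrite -[RHS](card_ltn_ord (ltnW (ltn_ord i))).
by apply: eq_card => j; rewrite !inE v_mono.
Qed.

Lemma card_incr_below i : #|[set a in v @: setT | a < v i]| = i.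
Proof.
rewrite -[RHS]card_incr_ltn -(card_imset _ incr_inj).
apply: eq_card => a; rewrite !inE; apply/andP/imsetP => [[/imsetP[j _ ->]]|[j]].
  by move=> lt_ji; exists j; rewrite ?inE.
by rewrite inE => lt_ji ->; rewrite imset_f.
Qed.

End IncreasingEnumeration.

(* Both [v i] and [w i] are the element of rank [i] of the common image. *)
Lemma incr_eq_image k N (v w : 'I_k -> 'I_N) :
  {mono v : i j / i < j} -> {mono w : i j / i < j} -> v @: setT = w @: setT -> v =1 w.
Proof.
move=> v_mono w_mono eq_im i.
have /imsetP[j _ eq_vw] : v i \in w @: setT by rewrite -eq_im imset_f.
suff eq_ij : i = j by rewrite eq_vw eq_ij.
apply/val_inj => /=; rewrite -(card_incr_below v_mono i) -(card_incr_below w_mono j).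
by rewrite eq_im eq_vw.
Qed.

Section SetLinFacts.
Variables (d : Order.disp_t) (P : finPOrderType d) (k : nat).
Variables (S : {ffun P -> {set 'I_(#|P| + k)}}) (HS : is_setlin S).

Lemma setlin_owner a p q : a \in S p -> a \in S q -> p = q.
Proof.
move=> ap aq; case: (eqVneq p q) => // neq_pq.
by case: HS => _ /(_ _ _ neq_pq) /disjointFr/(_ ap); rewrite aq.
Qed.

Lemma setlin_cover a : exists p, a \in S p.
Proof.
have : a \in \bigcup_(p : P) S p by case: HS => _ _ -> _; rewrite inE.
by case/bigcupP => p _; exists p.
Qed.

End SetLinFacts.

Section Encoding.
Variables (d : Order.disp_t) (P : finPOrderType d) (k : nat).
Variables (T : {ffun P -> 'I_#|P|}) (t : {ffun 'I_k -> nat}) (pp : {ffun 'I_k -> P}).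

Definition num_le r := #|[set i : 'I_k | t i <= r]|.

(* The block of [p] is [{main_pos p} ∪ {t i + i | pp i = p}]:
   the [main_pos] list [P] in the order of [T], and each [t i + i] is inserted right
   after the main positions of [T^-1 {0, ..., t i - 1}]. *)
Definition main_pos p := T p + num_le (T p).

Definition setlin_of : {ffun P -> {set 'I_(#|P| + k)}} :=
  [ffun p => [set a : 'I_(#|P| + k) | (val a == main_pos p) ||
              [exists i, (pp i == p) && (val a == t i + i)]]].

Lemma mem_setlin_of a p : (a \in setlin_of p) =
  (val a == main_pos p) || [exists i, (pp i == p) && (val a == t i + i)].
Proof. by rewrite ffunE inE. Qed.

Lemma num_le_homo : {homo num_le : r s / r <= s}.
Proof.
move=> r s le_rs; apply/subset_leq_card/subsetP => i; rewrite !inE => le_ti.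
exact: leq_trans le_rs.
Qed.

Lemma num_le_max r : num_le r <= k.
Proof. by rewrite -[k in _ <= k]card_ord max_card. Qed.

Lemma main_pos_lt p : main_pos p < #|P| + k.
Proof. by have := ltn_ord (T p); have := num_le_max (T p); rewrite /main_pos; lia. Qed.

Lemma ltn_main_pos p q : (main_pos p < main_pos q) = (T p < T q).
Proof.
rewrite /main_pos; case: (ltnP (T p) (T q)) => [lt_pq|le_qp].
  by have := num_le_homo (ltnW lt_pq); lia.
by have := num_le_homo le_qp; lia.
Qed.

Definition main_ord p : 'I_(#|P| + k) := Ordinal (main_pos_lt p).

Hypothesis linT : is_lin T.
Hypothesis t_homo : forall i j : 'I_k, i <= j -> t i <= t j.
Hypothesis t_le : forall i, t i <= #|P|.
Hypothesis pp_max : forall i, is_maximal_in (lin_preimage T (t i)) (pp i).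

Lemma main_pos_inj : injective main_pos.
Proof.
move=> p q eq_pq; apply: (bij_inj linT.1).
case: (ltngtP (T p) (T q)) => [lt_pq|lt_qp|/val_inj //].
  by have := lt_pq; rewrite -ltn_main_pos eq_pq ltnn.
by have := lt_qp; rewrite -ltn_main_pos eq_pq ltnn.
Qed.

Lemma ltn_num_le r (i : 'I_k) : (i < num_le r) = (t i <= r).
Proof.
apply/idP/idP => [|le_tr].
  apply: contraLR; rewrite -ltnNge -leqNgt => lt_rt.
  rewrite -[X in _ <= X](card_ltn_ord (ltnW (ltn_ord i))).
  apply/subset_leq_card/subsetP => j; rewrite !inE => le_tjr.
  rewrite ltnNge; apply: contraL le_tjr => /t_homo le_tij.
  by rewrite -ltnNge (leq_trans lt_rt le_tij).
rewrite -(card_ltn_ord (ltn_ord i)).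
apply/subset_leq_card/subsetP => j; rewrite !inE ltnS => /t_homo le_tji.
exact: leq_trans le_tji le_tr.
Qed.

Lemma extra_pos_lt i : t i + i < #|P| + k.
Proof. by have := t_le i; have := ltn_ord i; lia. Qed.

Definition extra_ord i : 'I_(#|P| + k) := Ordinal (extra_pos_lt i).

Lemma extra_ord_mono : {mono extra_ord : i j / i < j}.
Proof.
move=> i j /=; case: (ltngtP i j) => [lt_ij|lt_ji|/val_inj ->]; last by rewrite !ltnn.
  by have := t_homo (ltnW lt_ij); lia.
by have := t_homo (ltnW lt_ji); lia.
Qed.

Lemma ltn_main_extra p (i : 'I_k) : (main_pos p < t i + i) = (T p < t i).
Proof.
have := ltn_num_le (T p) i; rewrite /main_pos.
by case: (ltnP (T p) (t i)) => [lt_pt /negbT|le_tp]; rewrite -?leqNgt; lia.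
Qed.

Lemma ltn_extra_main p (i : 'I_k) : (t i + i < main_pos p) = (t i <= T p).
Proof.
have := ltn_num_le (T p) i; rewrite /main_pos.
by case: (ltnP (T p) (t i)) => [lt_pt /negbT|le_tp]; rewrite -?leqNgt; lia.
Qed.

Lemma main_neq_extra p (i : 'I_k) : main_pos p != t i + i.
Proof.
by rewrite neq_ltn ltn_main_extra ltn_extra_main; case: ltnP.
Qed.

Lemma main_in p : main_ord p \in setlin_of p.
Proof. by rewrite mem_setlin_of eqxx. Qed.

Lemma extra_in i : extra_ord i \in setlin_of (pp i).
Proof. by rewrite mem_setlin_of; apply/orP; right; apply/existsP; exists i; rewrite !eqxx. Qed.

Lemma extra_image : extra_ord @: setT = ~: (main_ord @: setT).
Proof.
apply/eqP; rewrite eqEcard; apply/andP; split.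
  apply/subsetP => _ /imsetP[i _ ->]; rewrite inE; apply/imsetP => -[p _ /(congr1 val)].
  by move/eqP; rewrite eq_sym (negbTE (main_neq_extra p i)).
have card_main : #|main_ord @: setT| = #|P|.
  by rewrite card_imset ?cardsT // => p q /(congr1 val) /main_pos_inj.
have card_extra : #|extra_ord @: setT| = k.
  by rewrite card_imset ?cardsT ?card_ord //; exact: incr_inj extra_ord_mono.
by have := cardsC (main_ord @: setT); rewrite card_main card_extra card_ord; lia.
Qed.

Lemma max_lt_threshold i : T (pp i) < t i.
Proof. by case: (pp_max i); rewrite inE. Qed.

Lemma threshold_le_succ i q : (pp i < q)%O -> t i <= T q.
Proof.
move=> lt_pq; rewrite leqNgt; apply/negP => lt_qt.
by case: (pp_max i) => _ /(_ q); rewrite inE => /(_ lt_qt).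
Qed.

Lemma setlin_of_owner a p q : a \in setlin_of p -> a \in setlin_of q -> p = q.
Proof.
rewrite !mem_setlin_of => /orP[/eqP ap|/existsP[i /andP[/eqP <- /eqP ai]]]
                          /orP[/eqP aq|/existsP[j /andP[/eqP <- /eqP aj]]].
- by apply: main_pos_inj; rewrite -ap -aq.
- by have := main_neq_extra p j; rewrite -ap aj eqxx.
- by have := main_neq_extra q i; rewrite -aq ai eqxx.
by congr (pp _); apply/(incr_inj extra_ord_mono)/val_inj; rewrite /= -ai -aj.
Qed.

Lemma main_pos_min a p : a \in setlin_of p -> main_pos p <= a.
Proof.
rewrite mem_setlin_of => /orP[/eqP -> //|/existsP[i /andP[/eqP <- /eqP ->]]].
by rewrite ltnW // ltn_main_extra max_lt_threshold.
Qed.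

Lemma setlin_of_cover : \bigcup_(p : P) setlin_of p = setT.
Proof.
apply/setP => a; rewrite inE; apply/bigcupP.
case: (boolP (a \in main_ord @: setT)) => [/imsetP[p _ ->]|].
  by exists p => //; exact: main_in.
by rewrite -in_setC -extra_image => /imsetP[i _ ->]; exists (pp i) => //; exact: extra_in.
Qed.

Lemma setlin_of_order p q : (p < q)%O ->
  forall a b, a \in setlin_of p -> b \in setlin_of q -> a < b.
Proof.
move=> lt_pq a b; have lt_Tpq := linT.2 _ _ lt_pq.
rewrite !mem_setlin_of => /orP[/eqP ->|/existsP[i /andP[/eqP ip /eqP ->]]]
                          /orP[/eqP ->|/existsP[j /andP[/eqP jq /eqP ->]]].
- by rewrite ltn_main_pos.
- by rewrite ltn_main_extra (ltn_trans lt_Tpq) // -jq max_lt_threshold.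
- by rewrite ltn_extra_main threshold_le_succ ?ip.
have lt_tij : t i < t j.
  apply: (@leq_ltn_trans (T q)); first by rewrite threshold_le_succ ?ip.
  by rewrite -jq max_lt_threshold.
have lt_ij : i < j by rewrite ltnNge; apply: contraL lt_tij => /t_homo; rewrite leqNgt.
by have := extra_ord_mono i j; rewrite lt_ij.
Qed.

Lemma setlin_of_is_setlin : is_setlin setlin_of.
Proof.
split; [move=> p | move=> p q neq_pq | exact: setlin_of_cover | exact: setlin_of_order].
  by apply/set0Pn; exists (main_ord p); exact: main_in.
rewrite -setI_eq0; apply/eqP/setP => a; rewrite !inE; apply/negP => /andP[ap aq].
by rewrite (setlin_of_owner ap aq) eqxx in neq_pq.
Qed.

End Encoding.

Section Uniqueness.
Variables (d : Order.disp_t) (P : finPOrderType d) (k : nat).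
Variables (T T' : {ffun P -> 'I_#|P|}) (t t' : {ffun 'I_k -> nat}).
Variables (pp pp' : {ffun 'I_k -> P}).
Hypotheses (linT : is_lin T) (linT' : is_lin T').
Hypotheses (t_homo : forall i j : 'I_k, i <= j -> t i <= t j)
           (t'_homo : forall i j : 'I_k, i <= j -> t' i <= t' j).
Hypotheses (t_le : forall i, t i <= #|P|) (t'_le : forall i, t' i <= #|P|).
Hypotheses (pp_max : forall i, is_maximal_in (lin_preimage T (t i)) (pp i))
           (pp'_max : forall i, is_maximal_in (lin_preimage T' (t' i)) (pp' i)).
Hypothesis eq_setlin : setlin_of T t pp = setlin_of T' t' pp'.

Lemma eq_main_pos p : main_pos T t p = main_pos T' t' p.
Proof.
apply/eqP; rewrite eqn_leq; apply/andP; split.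
  by apply: (main_pos_min t_homo pp_max (a := main_ord T' t' p)); rewrite eq_setlin main_in.
by apply: (main_pos_min t'_homo pp'_max (a := main_ord T t p)); rewrite -eq_setlin main_in.
Qed.

Lemma eq_lin : T = T'.
Proof.
apply/ffunP => p; apply/val_inj => /=.
rewrite -(card_ltn_bij p linT.1) -(card_ltn_bij p linT'.1).
apply: eq_card => q; rewrite !inE -(ltn_main_pos T t) -(ltn_main_pos T' t').
by rewrite !eq_main_pos.
Qed.

Lemma eq_threshold : t = t'.
Proof.
have eq_main : main_ord T t =1 main_ord T' t' by move=> p; apply/val_inj/eq_main_pos.
have eq_extra := incr_eq_image (extra_ord_mono t_homo t_le) (extra_ord_mono t'_homo t'_le).
apply/ffunP => i; have /(congr1 val) /= : extra_ord t_le i = extra_ord t'_le i.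
  apply: eq_extra.
  by rewrite (extra_image linT) // (extra_image linT') // (eq_imset _ eq_main).
by move/eqP; rewrite eqn_add2r => /eqP.
Qed.

Lemma eq_maximal : pp = pp'.
Proof.
apply/ffunP => i.
apply: (setlin_of_owner linT' t'_homo t'_le (pp := pp') (a := extra_ord t'_le i)).
  have -> : extra_ord t'_le i = extra_ord t_le i by apply/val_inj; rewrite /= eq_threshold.
  by rewrite -eq_setlin extra_in.
exact: extra_in.
Qed.

End Uniqueness.

Section Decoding.
Variables (d : Order.disp_t) (P : finPOrderType d) (k : nat).
Variables (S : {ffun P -> {set 'I_(#|P| + k)}}) (HS : is_setlin S).
Variable m : P -> 'I_(#|P| + k).
Hypotheses (m_in : forall p, m p \in S p) (m_min : forall p a, a \in S p -> m p <= a).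
Variable v : 'I_k -> 'I_(#|P| + k).
Hypotheses (v_mono : {mono v : i j / i < j}) (v_image : v @: setT = ~: (m @: setT)).
Variable o : 'I_k -> P.
Hypothesis o_in : forall i, v i \in S (o i).

Lemma min_inj : injective m.
Proof. by move=> p q eq_m; apply: (setlin_owner HS (m_in p)); rewrite eq_m m_in. Qed.

Lemma card_nonmin : #|~: (m @: setT)| = k.
Proof.
have := cardsC (m @: setT); rewrite card_imset ?cardsT ?card_ord //; last exact: min_inj.
by move/eqP; rewrite eqn_add2l => /eqP.
Qed.

Definition num_min_below x := #|[set a : 'I_(#|P| + k) | a < x] :&: m @: setT|.

Lemma num_min_below_homo : {homo num_min_below : x y / x <= y}.
Proof.
move=> x y le_xy; apply/subset_leq_card/subsetP => a; rewrite !inE => /andP[lt_ax ->].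
by rewrite (leq_trans lt_ax le_xy).
Qed.

Lemma num_min_below_max x : num_min_below x <= #|P|.
Proof.
rewrite -[#|P|]cardsT -(card_imset _ min_inj).
by apply/subset_leq_card/subsetIr.
Qed.

Lemma num_min_below_strict a x : a \in m @: setT -> a < x ->
  num_min_below a < num_min_below x.
Proof.
move=> a_min lt_ax.
have sub : a |: ([set b : 'I_(#|P| + k) | b < a] :&: m @: setT)
    \subset [set b : 'I_(#|P| + k) | b < x] :&: m @: setT.
  apply/subsetP => b; rewrite !inE => /orP[/eqP ->|/andP[lt_ba ->]].
    by rewrite lt_ax a_min.
  by rewrite (ltn_trans lt_ba lt_ax).
by have := subset_leq_card sub; rewrite cardsU1 !inE ltnn.
Qed.

(* The non-minimal positions below [x] are exactly the [v i] below [x]. *)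
Lemma num_min_below_add x : x <= #|P| + k ->
  num_min_below x + #|[set i | v i < x]| = x.
Proof.
move=> le_x; rewrite -[RHS](card_ltn_ord le_x) -(cardsID (m @: setT)); congr (_ + _).
rewrite -(card_imset _ (incr_inj v_mono)); apply: eq_card => a.
rewrite !inE -in_setC -v_image; apply/imsetP/andP => [[i] | [/imsetP[i _ ->]]].
  by rewrite inE => lt_ix ->; rewrite imset_f.
by move=> lt_ix; exists i; rewrite ?inE.
Qed.

Lemma v_notin_min i : v i \notin m @: setT.
Proof. by rewrite -in_setC -v_image imset_f. Qed.

Lemma min_lt_v i : m (o i) < v i.
Proof.
rewrite ltn_neqAle m_min // andbT; apply: contraNneq (v_notin_min i) => eq_mv.
by rewrite -(val_inj eq_mv) imset_f.
Qed.

Lemma ltn_num_min_below p q : (num_min_below (m p) < num_min_below (m q)) = (m p < m q).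
Proof.
case: (ltngtP (m p) (m q)) => [lt_pq|lt_qp|/val_inj ->]; last by rewrite ltnn.
  by rewrite num_min_below_strict ?imset_f.
by apply/negbTE; rewrite -leqNgt ltnW // num_min_below_strict ?imset_f.
Qed.

Lemma num_min_below_lt p : num_min_below (m p) < #|P|.
Proof.
apply: leq_trans (num_min_below_max (m p).+1).
by apply: num_min_below_strict; rewrite ?imset_f.
Qed.

Definition decode_lin : {ffun P -> 'I_#|P|} := [ffun p => Ordinal (num_min_below_lt p)].
Definition decode_thresholds : {ffun 'I_k -> nat} := [ffun i => num_min_below (v i)].
Definition decode_maxima : {ffun 'I_k -> P} := finfun o.

Lemma decode_lin_is_lin : is_lin decode_lin.
Proof.
split=> [|p q lt_pq].
  apply: inj_card_bij; last by rewrite card_ord.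
  move=> p q /(congr1 val); rewrite !ffunE /= => eq_num; apply: min_inj.
  case: (ltngtP (m p) (m q)) => [lt_pq|lt_qp|/val_inj //].
    by move: lt_pq; rewrite -ltn_num_min_below eq_num ltnn.
  by move: lt_qp; rewrite -ltn_num_min_below eq_num ltnn.
rewrite !ffunE /= ltn_num_min_below.
by case: HS => _ _ _ /(_ _ _ lt_pq _ _ (m_in p) (m_in q)).
Qed.

Lemma decode_thresholds_pos i : 0 < decode_thresholds i.
Proof.
rewrite ffunE; apply: leq_ltn_trans (num_min_below_strict _ (min_lt_v i)) => //.
exact: imset_f.
Qed.

Lemma decode_thresholds_homo (i j : 'I_k) :
  i <= j -> decode_thresholds i <= decode_thresholds j.
Proof. by rewrite !ffunE leqNgt -v_mono -leqNgt => /num_min_below_homo. Qed.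

Lemma decode_thresholds_le i : decode_thresholds i <= #|P|.
Proof. by rewrite ffunE num_min_below_max. Qed.

Lemma decode_maxima_max i :
  is_maximal_in (lin_preimage decode_lin (decode_thresholds i)) (decode_maxima i).
Proof.
split=> [|q]; rewrite !inE !ffunE /=.
  by apply: num_min_below_strict (min_lt_v i); rewrite imset_f.
move=> lt_qv lt_oq; have lt_vq : v i < m q.
  by case: HS => _ _ _ /(_ _ _ lt_oq _ _ (o_in i) (m_in q)).
by move: lt_qv; rewrite ltnNge num_min_below_homo // ltnW.
Qed.

Lemma decode_thresholds_add i : decode_thresholds i + i = v i.
Proof.
rewrite ffunE -[X in _ + X](card_incr_ltn v_mono i).
by rewrite num_min_below_add // ltnW.
Qed.

Lemma main_pos_decode p : main_pos decode_lin decode_thresholds p = m p.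
Proof.
rewrite /main_pos /num_le ffunE /= -[RHS](num_min_below_add (ltnW (ltn_ord (m p)))).
congr (_ + _); apply: eq_card => i; rewrite !inE ffunE.
case: (ltngtP (v i) (m p)) => [lt_vm|lt_mv|eq_vm].
- by rewrite num_min_below_homo // ltnW.
- by apply/negbTE; rewrite -ltnNge num_min_below_strict ?imset_f.
by have := v_notin_min i; rewrite (val_inj eq_vm) imset_f.
Qed.

Lemma setlin_of_decode : setlin_of decode_lin decode_thresholds decode_maxima = S.
Proof.
have sub p : setlin_of decode_lin decode_thresholds decode_maxima p \subset S p.
  apply/subsetP => a; rewrite mem_setlin_of main_pos_decode.
  case/orP=> [/eqP/val_inj ->//|/existsP[i /andP[/eqP <- /eqP eq_a]]].
  by rewrite ffunE (_ : a = v i) ?o_in //; apply/val_inj; rewrite eq_a decode_thresholds_add.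
apply/ffunP => p; apply/eqP; rewrite eqEsubset sub /=; apply/subsetP => a a_in.
have setlin_dec := setlin_of_is_setlin decode_lin_is_lin decode_thresholds_homo
  decode_thresholds_le decode_maxima_max.
have [q a_in_q] := setlin_cover setlin_dec a.
by rewrite (setlin_owner HS a_in (subsetP (sub q) a a_in_q)).
Qed.

End Decoding.

Section Bijection.
Variables (d : Order.disp_t) (P : finPOrderType d) (k : nat).

Lemma triple_is_setlin (x : Triples P k) :
  is_setlin (setlin_of (sval (sval x).1) (sval x).2.1 (sval x).2.2).
Proof.
case: x => [[[T linT] [t pp]] [/= _ t_homo t_le pp_max]].
exact: setlin_of_is_setlin.
Qed.

Definition encode (x : Triples P k) : SetLin P k := exist _ _ (triple_is_setlin x).

Lemma encode_inj : injective encode.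
Proof.
case=> [[[T linT] [t pp]] [/= t_pos t_homo t_le pp_max]].
case=> [[[T' linT'] [t' pp']] [/= t'_pos t'_homo t'_le pp'_max]] /(congr1 sval) /= eq_S.
have eq_t := eq_threshold linT linT' t_homo t'_homo t_le t'_le pp_max pp'_max eq_S.
have eq_pp := eq_maximal linT linT' t_homo t'_homo t_le t'_le pp_max pp'_max eq_S.
have eq_T := eq_lin linT linT' t_homo t'_homo pp_max pp'_max eq_S.
subst; apply: subset_eq_compat; congr (_, _).
exact: subset_eq_compat.
Qed.

Lemma encode_surj (S : SetLin P k) : exists x, encode x = S.
Proof.
case: S => S HS.
have min_exists p : exists a : 'I_(#|P| + k), a \in S p /\ forall b, b \in S p -> a <= b.
  case: HS => /(_ p) /set0Pn [a0 a0_in] _ _ _.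
  by case: (arg_minnP (fun a : 'I_(#|P| + k) => val a) a0_in) => a; exists a.
have [m m_spec] := fin_all_exists min_exists.
have m_in p := (m_spec p).1; have m_min p := (m_spec p).2.
have [v [v_mono v_image]] := incr_enum (card_nonmin HS m_in).
have [o o_in] := fin_all_exists (fun i => setlin_cover HS (v i)).
have triple : is_triple (exist _ _ (decode_lin_is_lin HS m_in),
                         (decode_thresholds m v, decode_maxima o)).
  split=> [i|i j|i|i].
  - exact: (decode_thresholds_pos m_min v_image o_in).
  - exact: (decode_thresholds_homo m v_mono).
  - exact: (decode_thresholds_le HS m_in).
  exact: (decode_maxima_max HS m_in m_min v_image o_in).
exists (exist _ _ triple); apply: subset_eq_compat.
exact: setlin_of_decode.
Qed.

End Bijection.

Theorem proposition21 (d : Order.disp_t) (P : finPOrderType d) (k : nat) :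
  exists f : SetLin P k -> Triples P k, bijective f.
Proof.
have decode S := constructive_indefinite_description _ (@encode_surj d P k S).
exists (fun S => sval (decode S)), (@encode d P k) => [S|x].
  exact: svalP (decode S).
by apply: encode_inj; rewrite (svalP (decode (encode x))).
Qed.
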